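(* The ai-semiring $\mathcal{B}_2^1$ divides the direct square $\mathcal{A}_2^1\times\mathcal{A}_2^1$, i.e., $\mathcal{B}_2^1$ is a homomorphic image of a subsemiring of $\mathcal{A}_2^1\times\mathcal{A}_2^1$.
   Context: An ai-semiring is a structure $(R,+,\cdot)$ with $(R,+)$ a semilattice, $(R,\cdot)$ a semigroup, and multiplication distributing over addition on both sides; in a semilattice, $s\le t$ iff $s+t=t$, and $s+t$ is the supremum of $s,t$ in this order. $\mathcal{A}_2^1$: Let $A_2=\langle e,a\mid eae=e^2=e,\ aea=a,\ a^2=0\rangle=\{e,a,ae,ea,0\}$ and let $A_2^1$ be $A_2$ with an identity element $1$ adjoined. Represent $A_2^1$ by order-preserving maps of the chain $0<1<2$ fixing $2$ (maps act on the right, composition $x(\alpha\beta)=(x\alpha)\beta$): $1\mapsto$ identity; $ea\mapsto(0\mapsto1,1\mapsto1,2\mapsto2)$; $ae\mapsto(0\mapsto0,1\mapsto2,2\mapsto2)$; $a\mapsto(0\mapsto1,1\mapsto2,2\mapsto2)$; $e\mapsto(0\mapsto0,1\mapsto0,2\mapsto2)$; $0\mapsto$ the constant map to $2$. The set of these maps is closed under pointwise maximum, and $\mathcal{A}_2^1=(A_2^1,+,\cdot)$ has addition given by pointwise maximum; equivalently its semilattice order is $e<1<ea$, $1<ae$, $ea<a$, $ae<a$, $a<0$ (with $ea,ae$ incomparable). $\mathcal{B}_2^1$: Let $B_2=\langle c,d\mid cdc=c,\ dcd=d,\ c^2=d^2=0\rangle=\{c,d,cd,dc,0\}$ and $B_2^1$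 be $B_2$ with identity $1$ adjoined. $\mathcal{B}_2^1=(B_2^1,+,\cdot)$ where addition is the join in the order: $0$ is the top, $c,d,cd,dc$ lie directly below $0$, and $1$ lies below $cd$ and $dc$ only (so e.g. $1+cd=cd$, $c+d=0$, $1+c=0$, $cd+dc=0$). *)

From Stdlib Require Import Arith.

(* ---------- A_2^1 via order-preserving maps of the chain 0<1<2 fixing 2 ---------- *)
Inductive A21 : Type := A1 | Ae | Aa | Aae | Aea | A0.

(* A map is recorded by its values (0 alpha, 1 alpha, 2 alpha). *)
Definition tmap : Type := (nat * nat * nat)%type.

Definition A_tomap (x : A21) : tmap :=
  match x with
  | A1  => (0, 1, 2)
  | Aea => (1, 1, 2)
  | Aae => (0, 2, 2)
  | Aa  => (1, 2, 2)
  | Ae  => (0, 0, 2)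
  | A0  => (2, 2, 2)
  end.

Definition tapp (f : tmap) (i : nat) : nat :=
  match f with (f0, f1, f2) => match i with 0 => f0 | 1 => f1 | _ => f2 end end.

(* right action: x (alpha beta) = (x alpha) beta *)
Definition tcomp (f g : tmap) : tmap :=
  (tapp g (tapp f 0), tapp g (tapp f 1), tapp g (tapp f 2)).

Definition tmax (f g : tmap) : tmap :=
  (Nat.max (tapp f 0) (tapp g 0), Nat.max (tapp f 1) (tapp g 1),
   Nat.max (tapp f 2) (tapp g 2)).

Definition tmap_eqb (f g : tmap) : bool :=
  Nat.eqb (tapp f 0) (tapp g 0) && Nat.eqb (tapp f 1) (tapp g 1)
  && Nat.eqb (tapp f 2) (tapp g 2).

(* decoding (total; default never reached on the represented set, see lemmas) *)
Definition A_ofmap (f : tmap) : A21 :=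
  if tmap_eqb f (A_tomap A1) then A1 else
  if tmap_eqb f (A_tomap Ae) then Ae else
  if tmap_eqb f (A_tomap Aa) then Aa else
  if tmap_eqb f (A_tomap Aae) then Aae else
  if tmap_eqb f (A_tomap Aea) then Aea else A0.

Definition A_mul (x y : A21) : A21 := A_ofmap (tcomp (A_tomap x) (A_tomap y)).
Definition A_add (x y : A21) : A21 := A_ofmap (tmax (A_tomap x) (A_tomap y)).

Lemma A_mul_spec x y : A_tomap (A_mul x y) = tcomp (A_tomap x) (A_tomap y).
Proof. destruct x, y; reflexivity. Qed.
Lemma A_add_spec x y : A_tomap (A_add x y) = tmax (A_tomap x) (A_tomap y).
Proof. destruct x, y; reflexivity. Qed.
(* sanity: the defining relations of A_2 *)
Lemma A_rels : A_mul (A_mul Ae Aa) Ae = Ae /\ A_mul Ae Ae = Ae /\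
  A_mul (A_mul Aa Ae) Aa = Aa /\ A_mul Aa Aa = A0 /\
  A_mul Aa Ae = Aae /\ A_mul Ae Aa = Aea.
Proof. repeat split. Qed.

Inductive B21 : Type := B1 | Bc | Bd | Bcd | Bdc | B0.

(* B_2 as the Brandt semigroup: c = e12, d = e21, cd = e11, dc = e22 *)
Definition B_unit (x : B21) : option (nat * nat) :=
  match x with
  | Bc => Some (1, 2) | Bd => Some (2, 1)
  | Bcd => Some (1, 1) | Bdc => Some (2, 2) | _ => None
  end.

Definition B_ofunit (p : nat * nat) : B21 :=
  match p with
  | (1, 2) => Bc | (2, 1) => Bd | (1, 1) => Bcd | (2, 2) => Bdc | _ => B0
  end.

Definition B_mul (x y : B21) : B21 :=
  match x, y with
  | B1, _ => y
  | _, B1 => x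
  | B0, _ => B0
  | _, B0 => B0
  | _, _ =>
    match B_unit x, B_unit y with
    | Some (i, j), Some (k, l) => if Nat.eqb j k then B_ofunit (i, l) else B0
    | _, _ => B0
    end
  end.

Definition B_eqb (x y : B21) : bool :=
  match x, y with
  | B1, B1 | Bc, Bc | Bd, Bd | Bcd, Bcd | Bdc, Bdc | B0, B0 => true
  | _, _ => false
  end.

(* join: 0 top; c,d,cd,dc directly below 0; 1 below cd and dc only *)
Definition B_add (x y : B21) : B21 :=
  if B_eqb x y then x else
  match x, y with
  | B1, Bcd | Bcd, B1 => Bcd
  | B1, Bdc | Bdc, B1 => Bdc
  | _, _ => B0
  end.

Lemma B_rels : B_mul (B_mul Bc Bd) Bc = Bc /\ B_mul (B_mul Bd Bc) Bd = Bd /\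
  B_mul Bc Bc = B0 /\ B_mul Bd Bd = B0 /\ B_mul Bc Bd = Bcd /\ B_mul Bd Bc = Bdc.
Proof. repeat split. Qed.

Definition AA_add (x y : A21 * A21) : A21 * A21 :=
  (A_add (fst x) (fst y), A_add (snd x) (snd y)).
Definition AA_mul (x y : A21 * A21) : A21 * A21 :=
  (A_mul (fst x) (fst y), A_mul (snd x) (snd y)).

Definition is_subsemiring (S : A21 * A21 -> Prop) : Prop :=
  forall x y, S x -> S y -> S (AA_add x y) /\ S (AA_mul x y).

Definition is_hom_image_of (S : A21 * A21 -> Prop) (f : A21 * A21 -> B21) : Prop :=
  (forall x y, S x -> S y ->
     f (AA_add x y) = B_add (f x) (f y) /\ f (AA_mul x y) = B_mul (f x) (f y))
  /\ (forall b : B21, exists x, S x /\ f x = b).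

(* The pairs (1,1), (a,e), (e,a), (ae,ea), (ea,ae) of A_2^1 x A_2^1 add and
   multiply like 1, c, d, cd, dc in B_2^1, except that sums and products which
   are 0 in B_2^1 land among the pairs having a coordinate in the up-set {a, 0}
   of a.  Together with all such pairs they form a subsemiring S; the pairs of S
   other than the five lifts form an ideal I absorbing both operations, and
   B_2^1 is the Rees quotient S / I. *)

Definition B_lift (b : B21) : A21 * A21 :=
  match b with
  | B1 => (A1, A1)
  | Bc => (Aa, Ae)
  | Bd => (Ae, Aa)
  | Bcd => (Aae, Aea)
  | Bdc => (Aea, Aae)
  | B0 => (A0, A0)
  end.

Definition collapse (p : A21 * A21) : B21 :=
  match p with
  | (A1, A1) => B1
  | (Aa, Ae) => Bc
  | (Ae, Aa) => Bd
  | (Aae, Aea) => Bcd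
  | (Aea, Aae) => Bdc
  | _ => B0
  end.

Definition A_ge_a (x : A21) : bool :=
  match x with Aa | A0 => true | _ => false end.

Definition B_cover (p : A21 * A21) : bool :=
  A_ge_a (fst p) || A_ge_a (snd p) || negb (B_eqb (collapse p) B0).

Lemma collapse_lift (b : B21) : collapse (B_lift b) = b.
Proof. destruct b; reflexivity. Qed.

Lemma B_cover_lift (b : B21) : B_cover (B_lift b) = true.
Proof. destruct b; reflexivity. Qed.

Ltac cases_in_B_cover p :=
  destruct p as [[] []]; try discriminate.

Lemma B_cover_add (p q : A21 * A21) :
  B_cover p = true -> B_cover q = true -> B_cover (AA_add p q) = true.
Proof. cases_in_B_cover p; cases_in_B_cover q; reflexivity. Qed.

Lemma B_cover_mul (p q : A21 * A21) :
  B_cover p = true -> B_cover q = true -> B_cover (AA_mul p q) = true.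
Proof. cases_in_B_cover p; cases_in_B_cover q; reflexivity. Qed.

Lemma collapse_add (p q : A21 * A21) :
  B_cover p = true -> B_cover q = true ->
  collapse (AA_add p q) = B_add (collapse p) (collapse q).
Proof. cases_in_B_cover p; cases_in_B_cover q; reflexivity. Qed.

Lemma collapse_mul (p q : A21 * A21) :
  B_cover p = true -> B_cover q = true ->
  collapse (AA_mul p q) = B_mul (collapse p) (collapse q).
Proof. cases_in_B_cover p; cases_in_B_cover q; reflexivity. Qed.

Theorem proposition3p2 :
  exists (S : A21 * A21 -> Prop) (f : A21 * A21 -> B21),
    is_subsemiring S /\ is_hom_image_of S f.
Proof.
  exists (fun p => B_cover p = true), collapse.
  split; [| split].
  - intros p q Hp Hq; split; [apply B_cover_add | apply B_cover_mul]; assumption.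
  - intros p q Hp Hq; split; [apply collapse_add | apply collapse_mul]; assumption.
  - intros b; exists (B_lift b); split; [apply B_cover_lift | apply collapse_lift].
Qed.
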